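(* If $G$ is a (simple) graph and $f$ is a demand function for the line graph $L(G)$ such that each edge $e = uv\in E(G)$ satisfies $f(e) \leq 1/(\max\{d(u), d(v)\} + 1)$, then $L(G)$ has an $f$-coloring.
   Context: The line graph $L(G)$ has vertex set $E(G)$, two edges being adjacent when they share an endpoint. A demand function for a graph $H$ is a function $f: V(H)\to [0,1]\cap\mathbb{Q}$. A fractional coloring of $H$ assigns to each vertex a measurable subset of $[0,1]$ so that adjacent vertices receive disjoint sets; an $f$-coloring is a fractional coloring $\phi$ with Lebesgue measure of $\phi(x)$ at least $f(x)$ for every vertex $x$. *)

From HB Require Import structures.
From mathcomp Require Import all_boot all_order all_algebra.
From mathcomp Require Import all_classical all_reals all_analysis.
Set Implicit Arguments. Unset Strict Implicit. Unset Printing Implicit Defensive.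
Import Order.TTheory GRing.Theory Num.Theory.

Definition simple_graph (V : finType) (adj : rel V) : Prop :=
  (forall u v, adj u v = adj v u) /\ (forall u, ~~ adj u u).

Definition is_edge (V : finType) (adj : rel V) (A : {set V}) : bool :=
  [exists u, exists v, adj u v && (A == [set u; v])].

Definition edge (V : finType) (adj : rel V) := {A : {set V} | is_edge adj A}.

Definition deg (V : finType) (adj : rel V) (u : V) : nat := #|[set v | adj u v]|.

Definition lg_adj (V : finType) (adj : rel V) (x y : edge adj) : Prop :=
  x <> y /\ exists w, w \in proj1_sig x /\ w \in proj1_sig y.

Local Open Scope classical_set_scope.
Local Open Scope ring_scope.

Definition demand_fun (V : finType) (adj : rel V) (f : edge adj -> rat) : Prop :=
  forall x, 0 <= f x <= 1.

Definition f_coloring (R : realType) (V : finType) (adj : rel V)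
    (f : edge adj -> rat) (phi : edge adj -> set R) : Prop :=
  (forall x, measurable (phi x) /\ phi x `<=` `[0%R, 1%R]) /\
  (forall x y, lg_adj x y -> phi x `&` phi y = set0) /\
  (forall x, ((ratr (f x) : R)%:E <= lebesgue_measure (phi x))%E).

From mathcomp Require Import all_boot perm zify.
From mathcomp Require Import boolp.
Set Implicit Arguments. Unset Strict Implicit. Unset Printing Implicit Defensive.

(* Let N := |V|! and give each edge uv of G the multiplicity
   N / (max(d(u), d(v)) + 1), an integer.  The resulting multigraph satisfies
   d(y) + mu(xy) <= N for every edge xy, and such a multigraph has a proper
   edge colouring with N colours.  This is Vizing's fan argument: in a proper
   partial colouring of maximal size leaving an edge xy0 short of colours,
   rotating the fan at x and swapping Kempe chains show that the sets of
   colours missing at the fan vertices are pairwise disjoint and all used on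
   the fan edges at x, whereas each is at least as large as the colour set of
   its fan edge, strictly so at y0.  Colour i stands for the interval
   [i/N, (i+1)/N[, so an edge uv receives measure at least
   1 / (max(d(u), d(v)) + 1) >= f(uv), disjointly from its neighbours in L(G). *)

Lemma card_bigcup_le (I T : finType) (P : pred I) (F : I -> {set T}) :
  #|\bigcup_(i | P i) F i| <= \sum_(i | P i) #|F i|.
Proof.
elim/big_rec2: _ => [|i n U _ le_U]; first by rewrite cards0.
by rewrite (leq_trans (leq_card_setU _ _)) ?leq_add2l.
Qed.

Lemma card_bigcup_disjoint (I T : finType) (A : {set I}) (F : I -> {set T}) :
  {in A &, forall i j, i != j -> [disjoint F i & F j]} ->
  #|\bigcup_(i in A) F i| = \sum_(i in A) #|F i|.
Proof.
move=> dF; rewrite -big_enum -[RHS]big_enum /=.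
have: {subset enum A <= A} by move=> i; rewrite mem_enum.
elim: (enum A) (enum_uniq A) => [|i s IH] /=; first by rewrite !big_nil cards0.
move=> /andP[i_s s_uniq] sA; rewrite !big_cons -IH //; last first.
  by move=> j sj; apply: sA; rewrite inE sj orbT.
apply/eqP; rewrite (leq_card_setU _ _).2 bigcup_seq; apply: bigcup_disjoint => j sj.
by apply: dF; rewrite ?sA ?inE ?eqxx ?sj ?orbT //; apply: contraNneq i_s => ->.
Qed.

Lemma ltn_sum (I : finType) (P : pred I) (E1 E2 : I -> nat) i :
  P i -> (forall j, P j -> E1 j <= E2 j) -> E1 i < E2 i ->
  \sum_(j | P j) E1 j < \sum_(j | P j) E2 j.
Proof.
move=> Pi le_E lt_Ei; rewrite (bigD1 i Pi) [X in _ < X](bigD1 i Pi) /= -addSn.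
by rewrite leq_add // leq_sum // => j /andP[/le_E].
Qed.

Lemma disjoint_setP (T : finType) (A B : {set T}) :
  reflect (forall e, e \in A -> e \notin B) [disjoint A & B].
Proof. by rewrite disjoints_subset; apply: (iffP subsetP) => sAB e /sAB; rewrite inE. Qed.

Lemma sub_path_belast (T : eqType) (e e' : rel T) (P : pred T) y q :
  {in P, forall s t, e s t -> e' s t} -> all P (belast y q) -> path e y q -> path e' y q.
Proof.
move=> ee'; elim: q y => //= t q IH y /andP[Py Pq] /andP[eyt tq].
by rewrite ee' // IH.
Qed.

(* A rotation g = r \o p composed of two reflections: on an orbit through a
   fixed point of p, the only other fixed point of p is the antipodal one. *)
Section ReflectionOrbit.
Variables (T : finType) (p r : T -> T).
Hypotheses (pK : involutive p) (rK : involutive r).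

Let g := r \o p.

Lemma rotation_inj : injective g.
Proof. exact: inj_comp (can_inj rK) (can_inj pK). Qed.

Lemma orbit_reflect s t : fconnect g s (r t) -> fconnect g s (p t).
Proof.
move=> srt; apply: connect_trans srt _.
rewrite fconnect_sym; last exact: rotation_inj.
by apply: connect1; rewrite /= /g /= pK.
Qed.

Lemma iter_rotation_reflect i s : iter i g (r (iter i g s)) = r s.
Proof.
have grg y : g (r (g y)) = r y by rewrite /g /= rK pK.
by elim: i s => // i IH s; rewrite iterSr iterS grg IH.
Qed.

Lemma iter_fixed_lt_order s k : iter k g s = s -> k < order g s -> k = 0.
Proof. by move=> gks lt_k; rewrite -(findex_iter lt_k) gks findex0. Qed.

Lemma orbit_fixpoint_half s i :
  p s = s -> p (iter i g s) = iter i g s -> 0 < i < order g s -> i + i = order g s.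
Proof.
move=> ps pis /andP[i_gt0 lt_i].
have back : iter (i + i) g s = s.
  apply: rotation_inj; rewrite -iterS -addnS iterD iterS.
  by rewrite [g (iter i g s)]/g /= pis iter_rotation_reflect /g /= ps.
case: (ltnP (i + i) (order g s)) => [lt_ii|le_ii].
  by have := iter_fixed_lt_order back lt_ii; lia.
suff: i + i - order g s = 0 by lia.
apply: (@iter_fixed_lt_order s); last by lia.
by rewrite -[RHS]back -[in RHS](subnK le_ii) iterD (iter_order rotation_inj).
Qed.

Lemma orbit_fixpoint_uniq s t1 t2 : p s = s ->
  fconnect g s t1 -> fconnect g s t2 -> p t1 = t1 -> p t2 = t2 -> t1 != s -> t2 != s ->
  t1 = t2.
Proof.
move=> ps st1 st2 pt1 pt2 t1s t2s.
have half t : fconnect g s t -> p t = t -> t != s -> findex g s t + findex g s t = order g s.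
  move=> st pt ts; apply: orbit_fixpoint_half; rewrite ?iter_findex ?findex_max //.
  by rewrite andbT lt0n findex_eq0 eq_sym.
have := half _ st1 pt1 t1s; have := half _ st2 pt2 t2s => h2 h1.
by rewrite -(iter_findex st1) -(iter_findex st2); congr iter; lia.
Qed.

End ReflectionOrbit.

Section EdgeColorSets.
Variables (V : finType) (N : nat).
Implicit Types (c : V -> V -> {set 'I_N}) (S : {set 'I_N}).

(* [c u v] is the set of colours of the parallel edges joining u and v. *)
Definition proper_coloring c :=
  (forall u v, c u v = c v u) /\ (forall u v w, v != w -> [disjoint c u v & c u w]).

Definition missing c u := [set e | [forall v, e \notin c u v]].

Definition weight c := \sum_u \sum_v #|c u v|.

Lemma missingP c u e : reflect (forall v, e \notin c u v) (e \in missing c u).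
Proof. by rewrite inE; apply: forallP. Qed.

Lemma missingF c u v e : e \in c u v -> (e \in missing c u) = false.
Proof. by move=> ec; apply/missingP => /(_ v); rewrite ec. Qed.

Lemma card_missing c u : N <= #|missing c u| + \sum_v #|c u v|.
Proof.
have used : ~: missing c u = \bigcup_v c u v.
  apply/setP => e; rewrite !inE negb_forall.
  by apply/existsP/bigcupP => [[v /negPn ev]|[v _ ev]]; exists v; rewrite ?negbK.
by rewrite -[X in X <= _](card_ord N) -(cardsC (missing c u)) used leq_add2l card_bigcup_le.
Qed.

Lemma proper_coloring_uniq c u v w e :
  proper_coloring c -> e \in c u v -> e \in c u w -> v = w.
Proof.
move=> [_ dc] ev ew; apply/eqP; apply: contraLR isT => /dc /disjoint_setP/(_ e ev).
by rewrite ew.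
Qed.

Lemma weight_lt c c' a b : (forall u v, #|c u v| <= #|c' u v|) -> #|c a b| < #|c' a b| ->
  weight c < weight c'.
Proof.
move=> le_c lt_ab; apply: (ltn_sum (i := a)) => // [u _|]; first exact: leq_sum.
exact: (ltn_sum (i := b)).
Qed.

Definition recolor c a b S u v :=
  if (u == a) && (v == b) || (u == b) && (v == a) then S else c u v.

Lemma recolor_id c a b S u v : u != a -> u != b -> recolor c a b S u v = c u v.
Proof. by rewrite /recolor => /negbTE-> /negbTE->. Qed.

Lemma recolor_row c a b S v : a != b -> recolor c a b S a v = if v == b then S else c a v.
Proof. by rewrite /recolor eqxx => /negbTE ab; rewrite ab /= orbF. Qed.

Lemma missing_recolor_id c a b S u :
  u != a -> u != b -> missing (recolor c a b S) u = missing c u.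
Proof.
by move=> ua ub; apply/setP => e; rewrite !inE; apply: eq_forallb => v; rewrite recolor_id.
Qed.

Lemma card_recolor c a b S : (forall u v, c u v = c v u) -> #|S| = #|c a b| ->
  forall u v, #|recolor c a b S u v| = #|c u v|.
Proof.
move=> cC cardS u v; rewrite /recolor.
by case: ifP => // /orP[]/andP[/eqP-> /eqP->]; rewrite // cC.
Qed.

Lemma disjoint_update (d : V -> {set 'I_N}) b S :
  (forall v w, v != w -> [disjoint d v & d w]) -> (forall w, w != b -> [disjoint S & d w]) ->
  forall v w, v != w ->
  [disjoint (if v == b then S else d v) & (if w == b then S else d w)].
Proof.
move=> dd dS v w vw; case: eqVneq => [vb|vb]; case: eqVneq => [wb|wb].
- by move: vw; rewrite vb wb eqxx.
- exact: dS.
- by rewrite disjoint_sym; apply: dS.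
- exact: dd.
Qed.

Lemma recolorC c a b S u v : recolor c a b S u v = recolor c b a S u v.
Proof. by rewrite /recolor orbC. Qed.

Lemma proper_recolor c a b g S : proper_coloring c -> a != b ->
  g \in missing c a -> g \in missing c b -> S \subset g |: c a b ->
  proper_coloring (recolor c a b S).
Proof.
move=> [cC dc] ab ga gb sS.
have dS a' b' : g \in missing c a' -> S \subset g |: c a' b' ->
    forall w, w != b' -> [disjoint S & c a' w].
  move=> ga' sS' w wb; apply/disjoint_setP => e /(subsetP sS').
  rewrite in_setU1 => /orP[/eqP->|eb]; first by move/missingP: ga'.
  by apply/(disjoint_setP _ _ (dc a' b' w _)); rewrite // eq_sym.
split=> [u v|u v w vw].
  by rewrite /recolor cC; case: (u == a); case: (u == b); case: (v == a); case: (v == b).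
have [->|ua] := eqVneq u a.
  rewrite !recolor_row //; apply: (disjoint_update (d := c a)) => //; first exact: dc.
  exact: dS.
have [->|ub] := eqVneq u b.
  have ba : b != a by rewrite eq_sym.
  rewrite !(recolorC c a) !recolor_row //; apply: (disjoint_update (d := c b)) => //.
    exact: dc.
  by apply: dS; rewrite // cC.
by rewrite !recolor_id //; apply: dc.
Qed.

Lemma weight_recolor_add c a b g : (forall u v, c u v = c v u) -> g \notin c a b ->
  weight c < weight (recolor c a b (g |: c a b)).
Proof.
move=> cC gab; apply: (weight_lt (a := a) (b := b)); last first.
  by rewrite /recolor !eqxx cardsU1 gab.
move=> u v; rewrite /recolor; case: ifP => // /orP[]/andP[/eqP-> /eqP->].
  exact/subset_leq_card/subsetU1.
by rewrite cC; exact/subset_leq_card/subsetU1.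
Qed.

Definition kempe_edge al be c : rel V := fun u v => (al \in c u v) || (be \in c u v).

Definition kempe_chain al be c x := [set v | connect (kempe_edge al be c) x v].

Definition kempe_swap al be c (K : {set V}) u v :=
  if u \in K then tperm al be @^-1: c u v else c u v.

Lemma kempe_chain_sym al be c u v : (forall u v, c u v = c v u) ->
  (u \in kempe_chain al be c v) = (v \in kempe_chain al be c u).
Proof.
move=> cC; rewrite !inE; apply: sym_connect_sym => {}u {}v.
by rewrite /kempe_edge cC.
Qed.

Lemma proper_kempe_swap al be c x : proper_coloring c ->
  proper_coloring (kempe_swap al be c (kempe_chain al be c x)).
Proof.
move=> [cC dc]; set K := kempe_chain al be c x.
have fixed u v : u \in K -> v \notin K -> tperm al be @^-1: c u v = c u v.
  move=> uK; apply: contraNeq => swapped; rewrite inE.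
  apply: connect_trans (connect1 _); first by rewrite inE in uK; exact: uK.
  apply: contraNT swapped => /norP[/negbTE alF /negbTE beF]; apply/eqP/setP => e.
  by rewrite inE; case: tpermP => [->|->|//]; rewrite ?alF ?beF.
split=> [u v|u v w vw]; rewrite /kempe_swap.
  case: ifP => uK; case: ifP => vK; last exact: cC.
  - by rewrite cC.
  - by rewrite (fixed _ _ uK (negbT vK)) cC.
  - by rewrite (fixed _ _ vK (negbT uK)) cC.
case: ifP => _; last exact: dc.
apply/disjoint_setP => e; rewrite !inE; exact: (disjoint_setP _ _ (dc u v w vw)).
Qed.

Lemma card_kempe_swap al be c K u v : #|kempe_swap al be c K u v| = #|c u v|.
Proof. by rewrite /kempe_swap; case: ifP => // _; rewrite card_preimset //; exact: perm_inj. Qed.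

Lemma kempe_swap_missing al be c K u e :
  (e \in missing (kempe_swap al be c K) u) =
  ((if u \in K then tperm al be e else e) \in missing c u).
Proof.
by rewrite /kempe_swap !inE; case: ifP => _; apply: eq_forallb => v; rewrite ?inE.
Qed.

(* Defaults to [v] itself when [e] is missing at [v]. *)
Definition partner c e v := if [pick u | e \in c v u] is Some u then u else v.

Lemma partner_eq c e u v : proper_coloring c -> e \in c v u -> partner c e v = u.
Proof.
move=> pc evu; rewrite /partner; case: pickP => [w evw|none]; last by have := none u; rewrite evu.
exact: proper_coloring_uniq pc evw evu.
Qed.

Lemma partner_missing c e v : e \in missing c v -> partner c e v = v.
Proof. by rewrite /partner; case: pickP => [u evu|//]; rewrite (missingF evu). Qed.

Lemma partnerK c e : proper_coloring c -> involutive (partner c e).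
Proof.
move=> pc v; have [u evu|none] := pickP [pred u | e \in c v u].
  by rewrite (partner_eq pc evu); apply: (partner_eq pc); case: pc => ->.
by rewrite !partner_missing //; apply/missingP => u; have /negbT := none u.
Qed.

Lemma kempe_chain_missing_uniq al be c x w1 w2 : proper_coloring c ->
  al \in missing c x -> be \in missing c w1 -> be \in missing c w2 ->
  w1 \in kempe_chain al be c x -> w2 \in kempe_chain al be c x -> w1 = w2.
Proof.
move=> pc alx bew1 bew2 w1K w2K.
(* A state (v, b) leaves v along [col b]; the rotation [r \o p] walks along the
   chain from (x, false), and the far ends missing be are fixed points of p. *)
pose col (b : bool) := if b then be else al.
pose p (s : V * bool) := (partner c (col s.2) s.1, s.2).
pose r (s : V * bool) := (s.1, ~~ s.2).
have pK : involutive p by move=> [v b]; rewrite /p /= partnerK.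
have rK : involutive r by move=> [v b]; rewrite /r /= negbK.
pose s0 := (x, false); pose orb := fconnect (r \o p) s0.
have ps0 : p s0 = s0 by rewrite /p /= partner_missing.
have step t : orb t -> orb (r t) -> orb (p t) && orb (r (p t)).
  move=> ot ort; apply/andP; split; first exact: (orbit_reflect pK rK ort).
  by apply: connect_trans ot (connect1 _); rewrite /= eqxx.
have in_orb v : v \in kempe_chain al be c x -> orb (v, true).
  rewrite inE => /connectP[q q_path ->].
  suff: orb (last x q, false) && orb (last x q, true) by case/andP.
  have : orb (x, false) && orb (x, true).
    by rewrite /orb connect0 /=; apply: connect1; rewrite /= ps0.
  elim: q (x) q_path => //= y q IH u /andP[/orP[al_uy|be_uy] yq] /andP[ouf out].
    by apply: IH yq _; have := step (u, false) ouf out; rewrite /p /= (partner_eq pc al_uy).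
  by apply: IH yq _; have := step (u, true) out ouf; rewrite /p /= (partner_eq pc be_uy) andbC.
have fixed w : be \in missing c w -> p (w, true) = (w, true) by rewrite /p /= => /partner_missing->.
suff: (w1, true) = (w2, true) by case.
apply: (orbit_fixpoint_uniq pK rK ps0 (in_orb _ w1K) (in_orb _ w2K));
  by rewrite ?fixed // xpair_eqE andbF.
Qed.

Section Multigraph.
Variable m : V -> V -> nat.
Hypothesis m_loopless : forall u, m u u = 0.
Hypothesis m_sym : forall u v, m u v = m v u.
Hypothesis m_deg : forall x y, 0 < m x y -> \sum_v m y v + m x y <= N.

Definition bounded c := forall u v, #|c u v| <= m u v.

Lemma bounded_pos c u v e : bounded c -> e \in c u v -> 0 < m u v.
Proof. by move=> bc euv; apply: leq_trans (bc u v); apply/card_gt0P; exists e. Qed.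

Lemma bounded_neq c u v e : bounded c -> e \in c u v -> u != v.
Proof. by move=> bc /(bounded_pos bc); apply: contraTneq => ->; rewrite m_loopless. Qed.

Lemma bounded_recolor c a b S : bounded c -> #|S| <= m a b -> bounded (recolor c a b S).
Proof.
move=> bc Sab u v; rewrite /recolor.
by case: ifP => // /orP[]/andP[/eqP-> /eqP->]; rewrite // m_sym.
Qed.

Lemma weight_le c : bounded c -> weight c <= \sum_u \sum_v m u v.
Proof. by move=> bc; apply: leq_sum => u _; apply: leq_sum. Qed.

Lemma card_missing_ge c x z : 0 < m x z ->
  m x z + \sum_v m z v <= #|missing c z| + \sum_v #|c z v|.
Proof. by move=> /m_deg le_N; have := card_missing c z; lia. Qed.

Section Fan.
Variables (c0 : V -> V -> {set 'I_N}) (x y0 : V).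
Hypotheses (c0_proper : proper_coloring c0) (c0_bounded : bounded c0).
Hypothesis c0_deficient : #|c0 x y0| < m x y0.
Hypothesis c0_maximal : forall c, proper_coloring c -> bounded c -> weight c <= weight c0.

Definition recoloring c := proper_coloring c /\ forall u v, #|c u v| = #|c0 u v|.

Lemma recoloring_c0 : recoloring c0.
Proof. by []. Qed.

Lemma recoloring_bounded c : recoloring c -> bounded c.
Proof. by move=> [_ eq_c] u v; rewrite eq_c. Qed.

Lemma recoloring_weight c : recoloring c -> weight c = weight c0.
Proof. by move=> [_ eq_c]; apply: eq_bigr => u _; apply: eq_bigr => v _. Qed.

Definition fan_step c : rel V := fun y z => [exists e, (e \in c x z) && (e \in missing c y)].

Lemma x_neq_y0 : x != y0.
Proof. by apply: contraTneq c0_deficient => <-; rewrite m_loopless. Qed.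

Lemma fan_step_neq c y z : recoloring c -> fan_step c y z -> z != x.
Proof.
by move=> /recoloring_bounded bc /existsP[e /andP[/(bounded_neq bc) + _]]; rewrite eq_sym.
Qed.

Lemma fan_path_neq c y q : recoloring c -> path (fan_step c) y q -> x \notin q.
Proof.
move=> rc; elim: q y => //= z q IH y /andP[yz zq].
by rewrite inE negb_or (IH z zq) andbT eq_sym (fan_step_neq rc yz).
Qed.

Lemma missing_x_y0_disjoint c : recoloring c -> [disjoint missing c x & missing c y0].
Proof.
move=> rc; have [[cC _] eq_c] := rc.
apply/disjoint_setP => g gx; apply/negP => gy.
have gxy : g \notin c x y0 by move/missingP: gx.
have := weight_recolor_add cC gxy; rewrite (recoloring_weight rc) ltnNge => /negP; apply.
apply: c0_maximal; first exact: proper_recolor (proj1 rc) x_neq_y0 gx gy _.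
by apply: bounded_recolor (recoloring_bounded rc) _; rewrite cardsU1 gxy eq_c.
Qed.

Lemma fan_shift c t a g : recoloring c -> a \in c x t ->
  g \in missing c x -> g \in missing c t -> recoloring (recolor c x t (g |: (c x t :\ a))).
Proof.
move=> rc axt gx gt; have [pc eq_c] := rc.
have xt := bounded_neq (recoloring_bounded rc) axt.
split; first by apply: proper_recolor pc xt gx gt _; rewrite setUS // subD1set.
move=> u v; rewrite -eq_c; apply: card_recolor; first by case: pc.
have gxt : g \notin c x t by move/missingP: gx.
by rewrite cardsU1 (cardsD1 a (c x t)) axt in_setD1 (negbTE gxt) andbF.
Qed.

(* Recolouring xt with g instead of a moves the common missing colour one step
   back along the fan, down to y0, where it would enlarge c0. *)
Lemma fan_path_disjoint q c : recoloring c -> path (fan_step c) y0 q -> uniq (y0 :: q) ->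
  [disjoint missing c x & missing c (last y0 q)].
Proof.
elim/last_ind: q c => [|q t IH] c rc; first by move=> _ _; exact: missing_x_y0_disjoint.
rewrite rcons_path last_rcons -rcons_cons rcons_uniq.
move=> /andP[q_path /existsP[a /andP[axt au]]] /andP[tq q_uniq].
set u := last y0 q in au tq.
apply/disjoint_setP => g gx; apply/negP => gt.
set c' := recolor c x t (g |: (c x t :\ a)).
have rc' : recoloring c' := fan_shift rc axt gx gt.
have xt : x != t := bounded_neq (recoloring_bounded rc) axt.
have x_row w : w != t -> c' x w = c x w by move=> wt; rewrite /c' recolor_row // (negbTE wt).
have P_q : all [pred s | (s != x) && (s != t)] (y0 :: q).
  apply/allP => s s_q /=; have st : s != t by apply: contraNneq tq => <-.
  rewrite st andbT; move: s_q; rewrite inE => /orP[/eqP->|]; first by rewrite eq_sym x_neq_y0.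
  by apply: contraTneq => ->; exact: fan_path_neq rc q_path.
have q_path' : path (fan_step c') y0 q.
  apply: sub_in_path P_q q_path => s s' /andP[sx st] /andP[s'x s't] /existsP[e /andP[es' es]].
  by apply/existsP; exists e; rewrite x_row // es' /c' missing_recolor_id.
have a_x : a \in missing c' x.
  apply/missingP => w; case: (eqVneq w t) => [->|wt].
    rewrite /c' recolor_row // eqxx !inE eqxx /= orbF.
    by apply: contraTneq axt => ->; move/missingP: gx.
  rewrite x_row //; apply: contra wt => axw.
  by rewrite (proper_coloring_uniq (proj1 rc) axw axt).
have a_u : a \in missing c' u.
  have /allP/(_ u (mem_last y0 q))/andP[ux ut] := P_q.
  by rewrite /c' missing_recolor_id.
by have /disjoint_setP/(_ a a_x) := IH c' rc' q_path' q_uniq; rewrite a_u.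
Qed.

Lemma fan_missing_disjoint c z : recoloring c -> connect (fan_step c) y0 z ->
  [disjoint missing c x & missing c z].
Proof.
move=> rc /connectP[q q_path ->]; case: (shortenP q_path) => q' q'_path q'_uniq _.
exact: fan_path_disjoint.
Qed.

Lemma fan_end_in_kempe c al be q : recoloring c -> al \in missing c x ->
  path (fan_step c) y0 q ->
  {in belast y0 q, forall s, be \in missing c s -> s \in kempe_chain al be c x} ->
  be \in missing c (last y0 q) -> last y0 q \in kempe_chain al be c x.
Proof.
move=> rc alx q_path chain_be; set z := last y0 q => bez; apply: contraT => zK.
(* Otherwise swapping al and be on the chain of z keeps the fan and makes al
   missing at both x and z. *)
have [pc eq_c] := rc; have [cC _] := pc.
set K := kempe_chain al be c z.
have chain_trans u v w : u \in kempe_chain al be c v -> v \in kempe_chain al be c w ->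
    u \in kempe_chain al be c w.
  by rewrite !inE => vu wv; apply: connect_trans wv vu.
have xK : x \notin K by rewrite kempe_chain_sym.
have K_out s : s \in K -> s \notin kempe_chain al be c x.
  by move=> sK; apply: contra zK => sx; apply: (chain_trans _ _ _ _ sx); rewrite kempe_chain_sym.
set c' := kempe_swap al be c K.
have rc' : recoloring c'.
  by split=> [|u v]; [exact: proper_kempe_swap | rewrite card_kempe_swap eq_c].
have x_row w : c' x w = c x w by rewrite /c' /kempe_swap (negbTE xK).
have q_path' : path (fan_step c') y0 q.
  apply: (sub_path_belast
    (P := [pred s | (be \in missing c s) ==> (s \in kempe_chain al be c x)]) _ _ q_path).
  - move=> s /implyP chain_s t /existsP[e /andP[ext es]].
    apply/existsP; exists e; rewrite x_row ext kempe_swap_missing /=.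
    case: ifP => // sK; rewrite tpermD //.
      by apply: contraTneq ext => <-; move/missingP: alx.
    by apply: contraNneq (K_out s sK) => be_e; apply: chain_s; rewrite be_e.
  by apply/allP => s /chain_be /implyP.
have fan_z' : connect (fan_step c') y0 z by apply/connectP; exists q.
have /disjoint_setP/(_ al) := fan_missing_disjoint rc' fan_z'.
have zK' : z \in K by rewrite inE connect0.
by rewrite !kempe_swap_missing (negbTE xK) zK' tpermL alx bez => /(_ isT).
Qed.

Lemma fan_in_kempe c al be z : recoloring c -> al \in missing c x ->
  connect (fan_step c) y0 z -> be \in missing c z -> z \in kempe_chain al be c x.
Proof.
move=> rc alx /connectP[q q_path ->].
suff: {in y0 :: q, forall s, be \in missing c s -> s \in kempe_chain al be c x}.
  by apply; exact: mem_last.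
elim/last_ind: q q_path => [|q t IH].
  by move=> _ s; rewrite inE => /eqP->; exact: (fan_end_in_kempe (q := [::])).
move=> full_path; have := full_path; rewrite rcons_path => /andP[q_path _].
move=> s; rewrite -rcons_cons mem_rcons inE => /orP[/eqP->|]; last exact: IH.
by have := fan_end_in_kempe rc alx full_path; rewrite last_rcons belast_rcons; apply; exact: IH.
Qed.

Lemma fan_missing_pairwise_disjoint al z1 z2 : al \in missing c0 x ->
  connect (fan_step c0) y0 z1 -> connect (fan_step c0) y0 z2 -> z1 != z2 ->
  [disjoint missing c0 z1 & missing c0 z2].
Proof.
move=> alx fz1 fz2 z12; apply/disjoint_setP => be bez1; apply: contra z12 => bez2.
apply/eqP; apply: (kempe_chain_missing_uniq c0_proper alx bez1 bez2).
  exact: fan_in_kempe recoloring_c0 alx fz1 bez1.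
exact: fan_in_kempe recoloring_c0 alx fz2 bez2.
Qed.

Lemma missing_fan_sub z : connect (fan_step c0) y0 z ->
  missing c0 z \subset \bigcup_(w in [set w | connect (fan_step c0) y0 w]) c0 x w.
Proof.
move=> fz; apply/subsetP => e ez.
have : e \notin missing c0 x.
  by apply: contraL ez => ex; have /disjoint_setP := fan_missing_disjoint recoloring_c0 fz; apply.
rewrite inE negb_forall => /existsP[w]; rewrite negbK => exw.
apply/bigcupP; exists w => //; rewrite inE; apply: connect_trans fz (connect1 _).
by apply/existsP; exists e; rewrite exw ez.
Qed.

Lemma deficient_not_maximal : False.
Proof.
set F := [set z | connect (fan_step c0) y0 z].
have y0F : y0 \in F by rewrite inE connect0.
have deg_le z : \sum_v #|c0 z v| <= \sum_v m z v by apply: leq_sum => v _.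
have m_xy0 : 0 < m x y0 by apply: leq_ltn_trans c0_deficient.
have m_le_missing z : z \in F -> m x z <= #|missing c0 z|.
  move=> zF; have m_xz : 0 < m x z.
    move: zF; rewrite inE => /connectP[q q_path ->]; case/lastP: q q_path => // q t.
    rewrite rcons_path last_rcons => /andP[_ /existsP[e /andP[ext _]]].
    exact: bounded_pos c0_bounded ext.
  by have := card_missing_ge c0 m_xz; have := deg_le z; lia.
have [al alx] : exists al, al \in missing c0 x.
  apply/set0Pn; rewrite -card_gt0.
  have : \sum_v #|c0 x v| < \sum_v m x v by apply: (ltn_sum (i := y0)).
  by have := card_missing_ge c0 (x := y0) (z := x); rewrite m_sym => /(_ m_xy0); lia.
have : \sum_(z in F) #|missing c0 z| <= \sum_(z in F) #|c0 x z|.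
  rewrite -card_bigcup_disjoint; last first.
    by move=> z1 z2; rewrite !inE; exact: fan_missing_pairwise_disjoint alx.
  apply: leq_trans (card_bigcup_le _ _); apply/subset_leq_card/bigcupsP => z.
  by rewrite inE; exact: missing_fan_sub.
have lt_sum : \sum_(z in F) #|c0 x z| < \sum_(z in F) #|missing c0 z|.
  apply: (ltn_sum (i := y0)) => // [z zF|].
    exact: leq_trans (c0_bounded x z) (m_le_missing z zF).
  exact: leq_trans c0_deficient (m_le_missing y0 y0F).
by rewrite leqNgt lt_sum.
Qed.

End Fan.

Lemma improve_coloring c x y : proper_coloring c -> bounded c -> #|c x y| < m x y ->
  exists c', [/\ proper_coloring c', bounded c' & weight c < weight c'].
Proof.
move=> pc bc lt_xy; apply: contrapT => no_better.
apply: (deficient_not_maximal pc bc lt_xy) => c' pc' bc'; rewrite leqNgt.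
by apply/negP => lt_c'; apply: no_better; exists c'.
Qed.

Theorem multigraph_edge_coloring :
  exists c, proper_coloring c /\ forall u v, #|c u v| = m u v.
Proof.
suff grow c : proper_coloring c -> bounded c ->
    exists c', proper_coloring c' /\ forall u v, #|c' u v| = m u v.
  apply: (grow (fun _ _ => set0)) => [|u v]; last by rewrite cards0.
  by split=> // u v w _; rewrite disjoints_subset sub0set.
have [n lt_n] := ubnP (\sum_u \sum_v m u v - weight c).
elim: n => // n IH in c lt_n *; move=> pc bc.
have [[u [v lt_uv]]|full] := pselect (exists u v, #|c u v| < m u v).
  have [c' [pc' bc' lt_c']] := improve_coloring pc bc lt_uv.
  by apply: (IH c') => //; have := weight_le bc'; lia.
exists c; split=> // u v; apply/eqP; rewrite eqn_leq bc leqNgt.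
by apply/negP => lt_uv; apply: full; exists u, v.
Qed.

End Multigraph.

End EdgeColorSets.

Section LineGraph.
Variables (V : finType) (adj : rel V).
Hypothesis adj_simple : simple_graph adj.

Lemma deg_lt_card u : deg adj u < #|V|.
Proof.
apply: (leq_ltn_trans (subset_leq_card (_ : _ \subset [set~ u]))).
  apply/subsetP => v; rewrite !inE; apply: contraTneq => ->; exact: adj_simple.2.
by rewrite cardsC1 ltn_predL; apply/card_gt0P; exists u.
Qed.

Lemma edge_ends (x : edge adj) : exists u v, adj u v /\ val x = [set u; v].
Proof. by case: x => A /= /existsP[u /existsP[v /andP[uv /eqP->]]]; exists u, v. Qed.

Lemma edge_at (x : edge adj) w : w \in val x -> exists2 a, adj w a & val x = [set w; a].
Proof.
have [u [v [uv ->]]] := edge_ends x; rewrite !inE => /orP[]/eqP->; first by exists v.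
by exists u; rewrite 1?setUC // adj_simple.1.
Qed.

Definition edge_colors N (c : V -> V -> {set 'I_N}) (x : edge adj) : {set 'I_N} :=
  \bigcup_(p | adj p.1 p.2 && (val x == [set p.1; p.2])) c p.1 p.2.

Lemma edge_colorsE N (c : V -> V -> {set 'I_N}) x u v : (forall u v, c u v = c v u) ->
  adj u v -> val x = [set u; v] -> edge_colors c x = c u v.
Proof.
move=> cC uv xE; apply/setP => e; apply/bigcupP/idP => [[[a b] /= /andP[ab /eqP abE]]|euv].
  have a_b : a != b by apply: contraTneq ab => ->; exact: adj_simple.2.
  have := set21 a b; have := set22 a b; rewrite -abE xE !inE.
  by move=> /orP[]/eqP ? /orP[]/eqP ?; subst; rewrite ?eqxx in a_b; rewrite // cC.
by exists (u, v); rewrite //= uv xE eqxx.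
Qed.

Lemma disjoint_edge_colors N (c : V -> V -> {set 'I_N}) x y :
  proper_coloring c -> lg_adj x y -> [disjoint edge_colors c x & edge_colors c y].
Proof.
move=> [cC dc] [xy [w [wx wy]]]; have [a wa xE] := edge_at wx; have [b wb yE] := edge_at wy.
rewrite (edge_colorsE cC wa xE) (edge_colorsE cC wb yE); apply: dc.
by apply: contra_not_neq xy => ab; apply: val_inj; rewrite xE yE ab.
Qed.

Lemma sum_fair_share_le N (a : V -> nat) y :
  (forall v, a v <= if adj y v then N %/ (deg adj y).+1 else 0) ->
  \sum_v a v + N %/ (deg adj y).+1 <= N.
Proof.
move=> le_a; set q := N %/ (deg adj y).+1.
have : \sum_v a v <= \sum_(v in [set v | adj y v]) q.
  by rewrite [X in _ <= X]big_mkcond; apply: leq_sum => v _; rewrite inE; exact: le_a.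
rewrite sum_nat_const -/(deg adj y) => le_sum.
by have := leq_divM N (deg adj y).+1; rewrite -/q mulnS; lia.
Qed.

Theorem line_graph_set_coloring :
  exists N (col : edge adj -> {set 'I_N}), [/\ 0 < N,
    forall x y, lg_adj x y -> [disjoint col x & col y] &
    forall x u v, adj u v -> val x = [set u; v] ->
      (maxn (deg adj u) (deg adj v)).+1 * #|col x| = N].
Proof.
(* |V|! is divisible by every max(d(u), d(v)) + 1 <= |V|. *)
pose N := #|V|`!; pose D u v := (maxn (deg adj u) (deg adj v)).+1.
pose m u v := if adj u v then N %/ D u v else 0.
have m_sym u v : m u v = m v u by rewrite /m /D adj_simple.1 maxnC.
have m_loopless u : m u u = 0 by rewrite /m (negbTE (adj_simple.2 u)).
have share u v : m u v <= if adj u v then N %/ (deg adj u).+1 else 0.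
  by rewrite /m; case: ifP => // _; apply: leq_div2l; rewrite // ltnS leq_maxl.
have m_deg x y : 0 < m x y -> \sum_v m y v + m x y <= N.
  move=> _; apply: leq_trans (sum_fair_share_le (share y)); rewrite leq_add2l m_sym.
  by apply: leq_trans (share y x) _; case: ifP.
have [c [pc card_c]] := multigraph_edge_coloring m_loopless m_sym m_deg.
exists N, (edge_colors c); split=> [|x y|x u v uv xE]; first exact: fact_gt0.
  exact: disjoint_edge_colors.
rewrite (edge_colorsE pc.1 uv xE) card_c /m uv mulnC divnK //.
by apply: dvdn_fact; rewrite /D /= gtn_max !deg_lt_card.
Qed.

End LineGraph.

From mathcomp Require Import all_order all_algebra all_classical all_reals all_analysis.
Import Order.TTheory GRing.Theory Num.Theory.
Local Open Scope ring_scope.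

Section IntervalColoring.
Variables (R : realType) (N : nat).
Hypothesis N_gt0 : (0 < N)%N.
Implicit Types (S T : {set 'I_N}) (r : R).
Local Open Scope classical_set_scope.

Definition color_interval (i : 'I_N) : set R := `[i%:R / N%:R, i.+1%:R / N%:R[.

Definition color_region (S : {set 'I_N}) : set R :=
  \big[setU/set0]_(i < N | i \in S) color_interval i.

Lemma color_interval_inj i j r : color_interval i r -> color_interval j r -> i = j.
Proof.
rewrite /color_interval /= !in_itv /= => /andP[ir ri] /andP[jr rj].
have lt_nat (a b : 'I_N) : a%:R / N%:R <= r -> r < b.+1%:R / N%:R -> (a < b.+1)%N.
  by move=> ar rb; have := le_lt_trans ar rb; rewrite ltr_pM2r ?invr_gt0 ?ltr0n // ltr_nat.
by apply/val_inj/eqP; rewrite eqn_leq -ltnS (lt_nat _ _ ir rj) -ltnS (lt_nat _ _ jr ri).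
Qed.

Lemma color_regionP S r : color_region S r -> exists2 i, i \in S & color_interval i r.
Proof. by rewrite /color_region; elim/big_rec: _ => // i X iS IH [|/IH]; [exists i|]. Qed.

Lemma measurable_color_region S : measurable (color_region S).
Proof. by apply: bigsetU_measurable => i _; exact: measurable_itv. Qed.

Lemma color_region_sub01 S : color_region S `<=` `[0, 1].
Proof.
move=> r /color_regionP[i _]; rewrite /color_interval /= !in_itv /= => /andP[ir ri].
apply/andP; split; first exact: le_trans (divr_ge0 (ler0n _ _) (ler0n _ _)) ir.
apply/ltW/(lt_le_trans ri).
by rewrite ler_pdivrMr ?ltr0n // mul1r ler_nat.
Qed.

Lemma color_region_disjoint S T : [disjoint S & T]%B ->
  (color_region S `&` color_region T = set0).
Proof.
move=> ST; apply/seteqP; split=> // r [/color_regionP[i iS ir] /color_regionP[j jT jr]].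
by move: (disjointFr ST iS); rewrite (color_interval_inj ir jr) jT.
Qed.

Lemma measure_color_interval i : lebesgue_measure (color_interval i) = (N%:R^-1)%:E.
Proof.
rewrite lebesgue_measure_itv /= lte_fin ltr_pM2r ?invr_gt0 ?ltr0n // ltr_nat ltnSn.
by rewrite -EFinD -mulrBl -natrB // subSnn mul1r.
Qed.

Lemma measure_color_region S : lebesgue_measure (color_region S) = (#|S|%:R / N%:R)%:E.
Proof.
rewrite measure_bigsetU_ord; last 2 first.
- by move=> i; exact: measurable_itv.
- by move=> i j _ _ [r [ir jr]]; exact: color_interval_inj ir jr.
rewrite (eq_bigr (fun _ => (N%:R^-1)%:E)) => [|i _]; last exact: measure_color_interval.
by rewrite sumEFin sumr_const mulr_natl.
Qed.

End IntervalColoring.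

Lemma ratr_inv_nat (R : realType) (d k : nat) : (0 < k)%N ->
  ratr (1 / d%:R) = k%:R / (d * k)%:R :> R.
Proof.
move=> k_gt0; rewrite fmorph_div rmorph1 rmorph_nat natrM invfM mulrCA mulfV ?mulr1 ?div1r //.
by rewrite pnatr_eq0 -lt0n.
Qed.

Theorem theorem6p1 (R : realType) (V : finType) (adj : rel V)
    (f : edge adj -> rat) :
  simple_graph adj ->
  demand_fun f ->
  (forall (x : edge adj) (u v : V), adj u v -> proj1_sig x = [set u; v] ->
     f x <= 1 / (maxn (deg adj u) (deg adj v)).+1%:R) ->
  exists phi : edge adj -> set R, f_coloring f phi.
Proof.
(* Only the upper bound on f matters. *)
move=> G_simple _ f_le.
have [N [col [N_gt0 col_disjoint col_card]]] := line_graph_set_coloring G_simple.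
exists (fun x => color_region (R := R) (col x)); split; [|split].
- by move=> x; split; [exact: measurable_color_region | exact: color_region_sub01].
- by move=> x y /col_disjoint; exact: color_region_disjoint.
move=> x; have [u [v [uv xE]]] := edge_ends x.
have card_x := col_card x u v uv xE.
have col_gt0 : (0 < #|col x|)%N.
  by rewrite lt0n; apply: contraTneq N_gt0 => col0; rewrite -card_x col0 muln0.
have N_eq : N%:R = ((maxn (deg adj u) (deg adj v)).+1 * #|col x|)%:R :> R by rewrite card_x.
rewrite measure_color_region // lee_fin N_eq -ratr_inv_nat // ler_rat; exact: f_le.
Qed.
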